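(* If $g:\{0,1\}^n\to\{0,1\}^{m(n)}$ is super-bits (in the polynomial-security sense below), then the ensemble $(g(U_n))_{n\in\mathbb{N}}$ is $\cap$-unpredictable.
   Context: $U_n$ is the uniform distribution on $\{0,1\}^n$. A generator is a family $g:\{0,1\}^n\to\{0,1\}^{m(n)}$ computable by polynomial-size circuits with $m(n)>n$. A nondeterministic circuit $D$ accepts $x$ iff some assignment to its nondeterministic inputs makes it output 1. Here $g$ is called super-bits if for every nondeterministic polynomial-size circuit family $D$, every polynomial $p$ and all sufficiently large $n$, $\Pr[D(U_{m(n)})=1]-\Pr[D(g(U_n))=1]<1/p(n)$. A nondeterministic algorithm $\mathcal{A}$ is function-computing if on every input each computation branch yields one of $0,1,\bot$ and some branch yields $0$ or $1$; $\mathcal{A}(x)=c\in\{0,1\}$ if every branch yields $c$ or $\bot$, and otherwise $\mathcal{A}(x)=\bot$. An ensemble $(Z_n)$ (with $Z_n$ over $\{0,1\}^{l(n)}$) is $\cap$-predictable if there exist a polynomial-size nondeterministic function-computing algorithm $\mathcal{A}$, a polynomial $p$, and infinitely many $n$ each with some $i=i(n)<|Z_n|$ such that $\Pr[\mathcal{A}(Z_n[1\ldots i])=Z_n[i+1]]\ge 1/2+1/p(n)$; it is $\cap$-unpredictable otherwise. *)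

From mathcomp Require Import all_boot all_order all_algebra.
Set Implicit Arguments. Unset Strict Implicit. Unset Printing Implicit Defensive.
Import Order.TTheory GRing.Theory Num.Theory.

Definition poly_eval (s : seq nat) (n : nat) : nat :=
  \sum_(j < size s) nth 0 s j * n ^ j.

Definition is_poly (f : nat -> nat) : Prop :=
  exists s : seq nat, has (fun a => a != 0) s /\ forall n, f n = poly_eval s n.

(* Boolean circuits as straight-line programs.  Wires 0..k-1 are the inputs, *)
(* gate number j defines wire k+j; gates refer to wires by index.            *)
Inductive gate : Type :=
| GConst of bool
| GNot of nat
| GAnd of nat & nat
| GOr of nat & nat.

Record circuit : Type := Circuit { c_gates : seq gate; c_outs : seq nat }.

Definition csize (C : circuit) : nat := size (c_gates C) + size (c_outs C).

Definition eval_gate (ws : seq bool) (g : gate) : bool :=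
  match g with
  | GConst b => b
  | GNot i => ~~ nth false ws i
  | GAnd i j => nth false ws i && nth false ws j
  | GOr i j => nth false ws i || nth false ws j
  end.

Definition eval_wires (inp : seq bool) (gs : seq gate) : seq bool :=
  foldl (fun ws g => rcons ws (eval_gate ws g)) inp gs.

Definition ceval (C : circuit) (x : seq bool) : seq bool :=
  [seq nth false (eval_wires x (c_gates C)) o | o <- c_outs C].

(* Nondeterministic circuits: a circuit reading the input x followed by    *)
(* nd_wit nondeterministic bits w.                                         *)
Record ndcircuit : Type := NDCircuit { nd_circ : circuit; nd_wit : nat }.

Definition ndsize (D : ndcircuit) : nat := csize (nd_circ D).

Definition nd_branch (D : ndcircuit) (x : seq bool) (w : (nd_wit D).-tuple bool)
  : bool := nth false (ceval (nd_circ D) (x ++ val w)) 0.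
Arguments nd_branch : clear implicits.

Definition nd_accepts (D : ndcircuit) (x : seq bool) : bool :=
  [exists w : (nd_wit D).-tuple bool, nd_branch D x w].

(* Function-computing branch output in {0,1,bot}: output bits (b0,b1);      *)
(* b0 = false means bot, otherwise the branch yields b1.                   *)
Definition fc_branch (A : ndcircuit) (x : seq bool) (w : (nd_wit A).-tuple bool)
  : option bool :=
  let o := ceval (nd_circ A) (x ++ val w) in
  if nth false o 0 then Some (nth false o 1) else None.
Arguments fc_branch : clear implicits.

Definition function_computing_on (A : ndcircuit) (len : nat) : Prop :=
  forall x : len.-tuple bool,
    [exists w : (nd_wit A).-tuple bool, fc_branch A (val x) w != None].

(* A(x) = Some c iff every branch yields c or bot (and some branch yields c, *)
(* which is automatic for function-computing A); otherwise None (= bot).   *)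
Definition fc_value (A : ndcircuit) (x : seq bool) : option bool :=
  if [exists w, fc_branch A x w == Some true] &&
     [forall w, fc_branch A x w != Some false] then Some true
  else if [exists w, fc_branch A x w == Some false] &&
          [forall w, fc_branch A x w != Some true] then Some false
  else None.

Local Open Scope ring_scope.
Definition prU (n : nat) (P : pred (n.-tuple bool)) : rat :=
  (#|[set x : n.-tuple bool | P x]|)%:R / (2 ^ n)%N%:R.

Definition is_generator (m : nat -> nat)
  (g : forall n, n.-tuple bool -> (m n).-tuple bool) : Prop :=
  (forall n, (n < m n)%N) /\
  exists q, is_poly q /\
    forall n, exists C : circuit, (csize C <= q n)%N /\
      forall x : n.-tuple bool, ceval C (val x) = val (g n x).

Definition super_bits (m : nat -> nat)
  (g : forall n, n.-tuple bool -> (m n).-tuple bool) : Prop :=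
  forall (D : nat -> ndcircuit) (q p : nat -> nat),
    is_poly q -> (forall n, (ndsize (D n) <= q n)%N) -> is_poly p ->
    exists N, forall n, (N <= n)%N ->
      prU (fun y : (m n).-tuple bool => nd_accepts (D n) (val y))
      - prU (fun x : n.-tuple bool => nd_accepts (D n) (val (g n x)))
      < 1 / (p n)%:R.

(* Ensembles: Z n is a distribution on {0,1}^{l n} (probability weights). *)
Definition ensemble (l : nat -> nat) := forall n, {ffun (l n).-tuple bool -> rat}.

Definition gen_ensemble (m : nat -> nat)
  (g : forall n, n.-tuple bool -> (m n).-tuple bool) : ensemble m :=
  fun n => [ffun z => prU (fun x : n.-tuple bool => g n x == z)].

(* Pr[ A(Z_n[1..i]) = Z_n[i+1] ]  (bits indexed from 1 in the paper) *)
Definition pred_prob (l : nat -> nat) (Z : ensemble l) (n i : nat)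
  (A : ndcircuit) : rat :=
  \sum_(z : (l n).-tuple bool)
     Z n z * (fc_value A (take i (val z)) == Some (nth false (val z) i))%:R.

Definition cap_predictable (l : nat -> nat) (Z : ensemble l) : Prop :=
  exists (A : nat -> ndcircuit) (q p : nat -> nat),
    is_poly q /\ (forall n, (ndsize (A n) <= q n)%N) /\ is_poly p /\
    forall N, exists n, (N <= n)%N /\
      exists i, (i < l n)%N /\ function_computing_on (A n) i /\
        1 / 2 + 1 / (p n)%:R <= pred_prob Z n i (A n).

Definition cap_unpredictable (l : nat -> nat) (Z : ensemble l) : Prop :=
  ~ cap_predictable Z.

(* Suppose a polynomial-size nondeterministic function-computing family A
   predicts bit i+1 of g(U_n) from its first i bits with success
   1/2 + 1/p(n) for infinitely many n.  From A we build a nondeterministic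
   "refuter" circuit D on strings y of length m(n): D guesses a branch of A
   on the prefix y[1..i] and accepts iff that branch outputs the complement
   of y[i+1].  Since A is function-computing,
   - D accepts y exactly when A(y[1..i]) is not y[i+1]; hence on g(U_n),
     Pr[D accepts] = 1 - (success of A) <= 1/2 - 1/p(n);
   - on U_{m(n)}, flipping bit i+1 is an involution that preserves the
     prefix, and at least one of y and its flip is accepted, so
     Pr[D accepts] >= 1/2.
   So D distinguishes with advantage >= 1/p(n) infinitely often, while its
   size exceeds that of A by a constant, contradicting super-bits. *)

From mathcomp Require Import all_boot all_order all_algebra.
From mathcomp Require Import zify ring lra.
From Stdlib Require Import ClassicalEpsilon.
Set Implicit Arguments. Unset Strict Implicit. Unset Printing Implicit Defensive.
Import GRing.Theory Num.Theory.

Section CircuitEvaluation.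

Lemma eval_wires_rcons inp gs g :
  eval_wires inp (rcons gs g) =
  rcons (eval_wires inp gs) (eval_gate (eval_wires inp gs) g).
Proof. by rewrite /eval_wires foldl_rcons. Qed.

Lemma eval_wires_cat s a b : eval_wires s (a ++ b) = eval_wires (eval_wires s a) b.
Proof. by rewrite /eval_wires foldl_cat. Qed.

Lemma size_eval_wires inp gs : size (eval_wires inp gs) = size inp + size gs.
Proof.
elim/last_ind: gs => [|gs g IH]; first by rewrite addn0.
by rewrite eval_wires_rcons !size_rcons IH addnS.
Qed.

Lemma eval_wires_prefix s gs j :
  j < size s -> nth false (eval_wires s gs) j = nth false s j.
Proof.
move=> lt_j; elim/last_ind: gs => [//|gs g IH].
by rewrite eval_wires_rcons nth_rcons size_eval_wires (ltn_addr _ lt_j) IH.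
Qed.

(* Output bit j of a circuit is the wire it names (missing outputs name an *)
(* out-of-range wire, hence read false).                                   *)
Lemma ceval_nth (C : circuit) inp j :
  nth false (ceval C inp) j =
  nth false (eval_wires inp (c_gates C))
    (nth (size inp + size (c_gates C)) (c_outs C) j).
Proof.
rewrite /ceval; case: (ltnP j (size (c_outs C))) => h.
  by rewrite (nth_map (size inp + size (c_gates C))).
rewrite nth_default ?size_map // [nth _ _ j]nth_default //.
by rewrite nth_default // size_eval_wires.
Qed.

End CircuitEvaluation.

Section Relocation.

(* A circuit reading (x ++ w) with |x| = i, |w| = k is re-wired to read     *)
(* (y ++ w) with |y| = m > i, taking x as the prefix y[0..i): wires below i *)
(* stay, the k witness wires and the gate wires shift by m - i.            *)
Definition relocate_wire (i k m r : nat) : nat :=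
  if r < i then r else if r < i + k then r - i + m else r - (i + k) + (m + k).

Definition relocate_gate (f : nat -> nat) (g : gate) : gate :=
  match g with
  | GConst b => GConst b
  | GNot a => GNot (f a)
  | GAnd a b => GAnd (f a) (f b)
  | GOr a b => GOr (f a) (f b)
  end.

Lemma relocate_wires i k m (y w : seq bool) gs :
  i < m -> size y = m -> size w = k ->
  forall r, nth false (eval_wires (y ++ w) (map (relocate_gate (relocate_wire i k m)) gs))
              (relocate_wire i k m r)
          = nth false (eval_wires (take i y ++ w) gs) r.
Proof.
move=> lt_im sy sw.
have sty : size (take i y) = i by rewrite size_take sy lt_im.
elim/last_ind: gs => [|gs g IH] r.
  rewrite /= !nth_cat sty sy /relocate_wire.
  case: (ltnP r i) => ri; first by rewrite (ltn_trans ri lt_im) nth_take.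
  case: (ltnP r (i + k)) => rik.
    have -> : r - i + m < m = false by lia.
    by congr nth; lia.
  have -> : r - (i + k) + (m + k) < m = false by lia.
  by rewrite !nth_default //; lia.
rewrite map_rcons !eval_wires_rcons !nth_rcons !size_eval_wires size_map
  !size_cat sty sy sw.
have -> : eval_gate (eval_wires (y ++ w) (map (relocate_gate (relocate_wire i k m)) gs))
   (relocate_gate (relocate_wire i k m) g) = eval_gate (eval_wires (take i y ++ w) gs) g.
  by case: g => [b|a|a b|a b] //=; rewrite ?IH.
rewrite IH.
have -> : (relocate_wire i k m r < m + k + size gs) = (r < i + k + size gs).
  by rewrite /relocate_wire; case: ifP => ?; [|case: ifP => ?]; apply/idP/idP; lia.
have -> : (relocate_wire i k m r == m + k + size gs) = (r == i + k + size gs).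
  by rewrite /relocate_wire; case: ifP => ?; [|case: ifP => ?]; apply/idP/idP; lia.
by [].
Qed.

End Relocation.

(* Six gates appended after wires 0..b-1 computing  a0 && (a1 != ii)  on  *)
(* the last wire b+5, for wires a0, a1, ii that exist or are out of range.  *)
Definition disagree_gadget (b ii a0 a1 : nat) : seq gate :=
  [:: GNot ii; GNot a1; GAnd a1 b; GAnd (b + 1) ii; GOr (b + 2) (b + 3);
      GAnd a0 (b + 4)].

Definition outside_gadget (b a : nat) : Prop := a < b \/ b + 6 <= a.

Lemma nth_cat_outside (s t : seq bool) a :
  outside_gadget (size s) a -> size t <= 6 -> nth false (s ++ t) a = nth false s a.
Proof.
move=> [lt_a|out_a] st; first by rewrite nth_cat lt_a.
by rewrite !nth_default ?size_cat //; lia.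
Qed.

Lemma nth_cat_shift (s t : seq bool) k : nth false (s ++ t) (size s + k) = nth false t k.
Proof. by rewrite nth_cat ltnNge leq_addr addKn. Qed.

Lemma disagree_gadget_out (s : seq bool) ii a0 a1 :
  ii < size s -> outside_gadget (size s) a0 -> outside_gadget (size s) a1 ->
  nth false (eval_wires s (disagree_gadget (size s) ii a0 a1)) (size s + 5) =
  nth false s a0 && (nth false s a1 != nth false s ii).
Proof.
move=> lt_ii h0 h1.
have in_ii : outside_gadget (size s) ii by left.
have nth_size t : nth false (s ++ t) (size s) = nth false t 0.
  by rewrite -[in LHS](addn0 (size s)) nth_cat_shift.
rewrite /eval_wires /disagree_gadget /= -!cats1 -!catA /=.
rewrite !nth_cat_shift !nth_size /= !nth_cat_outside //.
by case: (nth false s a0); case: (nth false s a1); case: (nth false s ii).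
Qed.

Section Refuter.

Variable A : ndcircuit.

(* The refuter for A at position i on inputs of length m: it runs A,        *)
(* relocated to read the prefix y[0..i) and the shared witness w, and feeds *)
(* A's two output bits (valid, value) and y_i to the gadget.  An output     *)
(* that names no wire of A is redirected to an out-of-range wire.           *)
Definition refuter (i m : nat) : ndcircuit :=
  let k := nd_wit A in let gs := c_gates (nd_circ A) in
  let T := i + k + size gs in let L := m + k + size gs in
  let out j := let r := nth T (c_outs (nd_circ A)) j in
               if r < T then relocate_wire i k m r else L + 6 in
  NDCircuit (Circuit (map (relocate_gate (relocate_wire i k m)) gs
                        ++ disagree_gadget L i (out 0) (out 1)) [:: L + 5]) k.

Lemma refuter_branch i m (y w : seq bool) :
  i < m -> size y = m -> size w = nd_wit A ->
  nth false (ceval (nd_circ (refuter i m)) (y ++ w)) 0 =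
  let o := ceval (nd_circ A) (take i y ++ w) in
  nth false o 0 && (nth false o 1 != nth false y i).
Proof.
move=> lt_im sy sw.
have sty : size (take i y) = i by rewrite size_take sy lt_im.
rewrite /= !ceval_nth size_cat sty sw /= eval_wires_cat.
set gs := c_gates (nd_circ A); set k := nd_wit A.
set T := i + k + size gs; set L := m + k + size gs.
set Dw := eval_wires (y ++ w) (map (relocate_gate (relocate_wire i k m)) gs).
set Aw := eval_wires (take i y ++ w) gs.
have sD : size Dw = L by rewrite size_eval_wires size_map size_cat sy sw.
have sA : size Aw = T by rewrite size_eval_wires size_cat sty sw.
have out_ok j : let r := nth T (c_outs (nd_circ A)) j in
   let a := if r < T then relocate_wire i k m r else L + 6 in
   outside_gadget L a /\ nth false Dw a = nth false Aw r.
  move=> r a; rewrite /a; case: ifP => lt_rT.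
    split; last by rewrite /Dw /Aw relocate_wires.
    by left; rewrite /relocate_wire; case: ifP => ?; [|case: ifP => ?]; lia.
  split; first by right.
  by rewrite !nth_default ?sA ?sD //; lia.
have [out0 val0] := out_ok 0; have [out1 val1] := out_ok 1.
rewrite -sD in out0 out1 val0 val1 *.
rewrite disagree_gadget_out //; last by rewrite sD; lia.
rewrite val0 val1 /Dw eval_wires_prefix ?size_cat ?sy //; last by lia.
by rewrite nth_cat sy lt_im.
Qed.

Lemma refuter_size i m : ndsize (refuter i m) <= ndsize A + 7.
Proof. by rewrite /ndsize /csize /= size_cat size_map /=; lia. Qed.

Lemma refuter_accepts i m (y : seq bool) : i < m -> size y = m ->
  nd_accepts (refuter i m) y =
  [exists w : (nd_wit A).-tuple bool,
     fc_branch A (take i y) w == Some (~~ nth false y i)].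
Proof.
move=> lt_im sy; apply: eq_existsb => w.
rewrite /nd_branch /fc_branch refuter_branch ?size_tuple //=.
by case: (nth false _ 0); case: (nth false _ 1); case: (nth false y i).
Qed.

Lemma fc_value_eq x b :
  [exists w, fc_branch A x w != None] ->
  (fc_value A x == Some b) = ~~ [exists w, fc_branch A x w == Some (~~ b)].
Proof.
move=> /existsP [w0 valid_w0].
have some_value : [exists w, fc_branch A x w == Some true]
                  || [exists w, fc_branch A x w == Some false].
  by case E: (fc_branch A x w0) valid_w0 => [[]|] // _;
    apply/orP; [left|right]; apply/existsP; exists w0; rewrite E.
rewrite /fc_value -!negb_exists; move: some_value.
by case: b; case: [exists w, _ == Some true]; case: [exists w, _ == Some false].
Qed.

End Refuter.

Section UniformDistribution.
Local Open Scope ring_scope.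

Lemma eq_prU n (P Q : pred (n.-tuple bool)) : P =1 Q -> prU P = prU Q.
Proof.
move=> eqPQ; rewrite /prU (@eq_card _ [set x | P x] [set x | Q x]) // => x.
by rewrite !inE eqPQ.
Qed.

Lemma card_set_sum (T : finType) (Q : pred T) :
  #|[set x | Q x]| = (\sum_x (Q x : nat))%N.
Proof.
rewrite -sum1_card big_mkcond /=; apply: eq_bigr => x _.
by rewrite inE; case: (Q x).
Qed.

Lemma sum_card_preimage (T U : finType) (g : T -> U) (P : pred U) :
  (\sum_z #|[set x | g x == z]| * P z)%N = #|[set x | P (g x)]|.
Proof.
rewrite card_set_sum.
under eq_bigr => z _ do rewrite card_set_sum big_distrl /=.
rewrite exchange_big /=; apply: eq_bigr => x _.
rewrite (bigD1 (g x)) //= eqxx mul1n big1 ?addn0 // => z /negbTE.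
by rewrite eq_sym => ->.
Qed.

Lemma prU_pushforward n M (g : n.-tuple bool -> M.-tuple bool)
    (P : pred (M.-tuple bool)) :
  \sum_z prU (fun x : n.-tuple bool => g x == z) * (P z)%:R =
  prU (fun x => P (g x)).
Proof.
rewrite /prU -sum_card_preimage natr_sum mulr_suml; apply: eq_bigr => z _.
by rewrite natrM mulrAC.
Qed.

Lemma prU_compl n (P : pred (n.-tuple bool)) :
  prU (fun x => ~~ P x) = 1 - prU P.
Proof.
have compl : ~: [set x | P x] = [set x | ~~ P x] by apply/setP => x; rewrite !inE.
have card_compl := cardsC [set x | P x].
rewrite compl card_tuple card_bool in card_compl.
have pos : (2 ^ n)%:R != 0 :> rat by rewrite pnatr_eq0 expn_eq0.
rewrite /prU -card_compl natrD; field => //.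
by rewrite -natrD card_compl.
Qed.

Lemma prU_half_involution M (F : pred (M.-tuple bool))
    (phi : M.-tuple bool -> M.-tuple bool) :
  involutive phi -> (forall y, F y || F (phi y)) -> 1 / 2 <= prU F.
Proof.
move=> inv_phi covered; rewrite /prU.
set S := [set y | F y].
have card_compl := cardsC S.
rewrite card_tuple card_bool in card_compl.
have le_compl : (#|~: S| <= #|S|)%N.
  rewrite -(card_imset _ (inv_inj inv_phi)); apply: subset_leq_card.
  apply/subsetP => z /imsetP [y]; rewrite !inE => Fy ->.
  by move: (covered y); rewrite (negbTE Fy).
have half : ((2 ^ M)%:R <= 2 * (#|S|)%:R :> rat).
  by rewrite -card_compl natrD; move: le_compl; rewrite -(ler_nat rat); lra.
have pos : 0 < (2 ^ M)%:R :> rat by rewrite ltr0n expn_gt0.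
by rewrite ler_pdivlMr // mulrAC ler_pdivrMr //; lra.
Qed.

End UniformDistribution.

Section BitFlip.

Variables (M i : nat).
Hypothesis lt_iM : i < M.

Definition flip_bit (y : M.-tuple bool) : M.-tuple bool :=
  insubd y (set_nth false y i (~~ nth false y i)).

Lemma flip_bit_val y : val (flip_bit y) = set_nth false y i (~~ nth false y i).
Proof.
have size_M : maxn i.+1 M = M by apply/maxn_idPr.
by rewrite val_insubd size_set_nth size_tuple size_M eqxx.
Qed.

Lemma flip_bit_nth y j :
  nth false (flip_bit y) j = if j == i then ~~ nth false y i else nth false y j.
Proof. by rewrite flip_bit_val nth_set_nth. Qed.

Lemma flip_bit_involutive : involutive flip_bit.
Proof.
move=> y; apply: val_inj; apply: (@eq_from_nth _ false); first by rewrite !size_tuple.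
move=> j _; rewrite !flip_bit_nth eqxx.
by case: (j =P i) => [->|]; rewrite ?negbK.
Qed.

Lemma flip_bit_take y : take i (flip_bit y) = take i y.
Proof.
rewrite flip_bit_val set_nthE size_tuple lt_iM take_size_cat //.
by rewrite size_take size_tuple lt_iM.
Qed.

End BitFlip.

Lemma is_poly_addn q c : is_poly q -> is_poly (fun n => q n + c).
Proof.
case=> -[|a t] [nonzero eval_q] //.
exists ((a + c) :: t); split.
  by move: nonzero => /=; rewrite addn_eq0 negb_and => /orP [->|->]; rewrite ?orbT.
by move=> n; rewrite eval_q /poly_eval /= !big_ord_recl /=; lia.
Qed.

Section RefuterProbabilities.
Local Open Scope ring_scope.

Variables (A : ndcircuit) (i : nat).
Hypothesis fc_A : function_computing_on A i.

Lemma fc_prefix M (y : M.-tuple bool) : (i <= M)%N ->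
  [exists w, fc_branch A (take i y) w != None].
Proof.
move=> le_iM; have := fc_A (insubd (nseq_tuple i false) (take i y)).
by rewrite val_insubd size_takel ?size_tuple // eqxx.
Qed.

(* On uniform strings the refuter accepts with probability at least 1/2: *)
(* of y and y with bit i flipped, one makes a valid branch of A wrong.   *)
Lemma refuter_uniform_half M : (i < M)%N ->
  1 / 2 <= prU (fun y : M.-tuple bool => nd_accepts (refuter A i M) y).
Proof.
move=> lt_iM.
rewrite (eq_prU (Q := fun y : M.-tuple bool =>
  [exists w, fc_branch A (take i y) w == Some (~~ nth false y i)])); last first.
  by move=> y; rewrite refuter_accepts ?size_tuple.
apply: (prU_half_involution (flip_bit_involutive lt_iM)) => y.
have /existsP [w valid_w] := fc_prefix y (ltnW lt_iM).
rewrite flip_bit_take // flip_bit_nth // eqxx negbK.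
case E: (fc_branch A (take i y) w) valid_w => [c|] // _.
apply/orP; case: (c =P ~~ nth false y i) => [eq_c|ne_c]; [left|right];
  apply/existsP; exists w; rewrite E ?eq_c //.
by move: ne_c; case: c {E}; case: (nth false y i).
Qed.

(* On g(U_n) the refuter accepts exactly when the prediction fails. *)
Lemma refuter_generated (m : nat -> nat)
    (g : forall n, n.-tuple bool -> (m n).-tuple bool) n : (i < m n)%N ->
  pred_prob (gen_ensemble g) n i A =
  1 - prU (fun x => nd_accepts (refuter A i (m n)) (val (g n x))).
Proof.
move=> lt_im; rewrite -prU_compl /pred_prob.
under eq_bigr => z _ do rewrite ffunE.
rewrite prU_pushforward; apply: eq_prU => x.
rewrite refuter_accepts ?size_tuple // fc_value_eq ?negbK //.
exact: fc_prefix (ltnW lt_im).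
Qed.

End RefuterProbabilities.

Theorem proposition5p2 (m : nat -> nat)
  (g : forall n, n.-tuple bool -> (m n).-tuple bool) :
  is_generator g -> super_bits g -> cap_unpredictable (gen_ensemble g).
Proof.
move=> _ super [A [q [p [poly_q [size_A [poly_p predicts]]]]]].
(* Choose, for each n, a position where A predicts (if there is one). *)
pose good n i := (i < m n)%N /\ function_computing_on (A n) i /\
   (1 / 2 + 1 / (p n)%:R <= pred_prob (gen_ensemble g) n i (A n))%R.
pose pos n := epsilon (inhabits 0%N) (good n).
pose D n := refuter (A n) (pos n) (m n).
have size_D n : (ndsize (D n) <= q n + 7)%N.
  exact: leq_trans (refuter_size _ _ _) (leq_add (size_A n) (leqnn 7)).
have [N fools] := super D _ p (is_poly_addn 7 poly_q) size_D poly_p.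
have [n [le_Nn [i good_i]]] := predicts N.
have [lt_im [fc_A success]] : good n (pos n) by apply: epsilon_spec; exists i.
have := fools n le_Nn.
have := refuter_uniform_half fc_A lt_im.
have := refuter_generated fc_A g lt_im.
rewrite /D; lra.
Qed.
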